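(* Let $a>0$, let $m$ be the fixed positive integer of the standing setting, let $0<h\le a$, $\gamma>0$, and $1\le k\le m$. For any $g\in\mathcal C^k[0,h]$ define $w(x):=g(x)x^{\gamma-1}$ for $0<x\le h$ and $w(0):=0$. Then $w\in\mathcal C^{k-1}[0,h]$ and \[ \|w\|_{C^{k-1}[0,h]}\le C\|g^{(k)}\|_{C[0,h]}, \] where $C$ is a positive constant depending only on $a$, $k$ and $\gamma$.
   Context: Standing setting: $0<\alpha<1$, $n$ a positive integer, $m:=\max\{j\in\{0,1,2,\dots\}:j<n\alpha\}$. $C^k[0,h]$ denotes the $k$ times continuously differentiable functions on $[0,h]$ with norm $\|v\|_{C^k[0,h]}=\max_{0\le j\le k}\max_{[0,h]}|v^{(j)}|$, and $\mathcal C^k[0,h]:=\{v\in C^k[0,h]: v^{(j)}(0)=0,\ j=0,1,\dots,k\}$. *)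

From Stdlib Require Import Reals.
From Coquelicot Require Import Coquelicot.
Open Scope R_scope.

Definition Icc (h x : R) : Prop := 0 <= x <= h.

Definition is_m (alpha : R) (n m : nat) : Prop :=
  INR m < INR n * alpha /\ (forall j : nat, INR j < INR n * alpha -> (j <= m)%nat).

Definition derive_within (D : R -> Prop) (f : R -> R) (x l : R) : Prop :=
  filterlim (fun y => (f y - f x) / (y - x))
            (within (fun y => D y /\ y <> x) (locally x)) (locally l).

Definition cont_within (D : R -> Prop) (f : R -> R) (x : R) : Prop :=
  filterlim f (within D (locally x)) (locally (f x)).

Definition Ck_derivs (k : nat) (h : R) (f : R -> R) (F : nat -> R -> R) : Prop :=
  (forall x, Icc h x -> F O x = f x) /\
  (forall j, (j <= k)%nat -> forall x, Icc h x -> cont_within (Icc h) (F j) x) /\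
  (forall j, (j < k)%nat -> forall x, Icc h x -> derive_within (Icc h) (F j) x (F (S j) x)).

(* membership in the space \mathcal C^k[0,h]: derivatives up to order k vanish at 0 *)
Definition calC (k : nat) (h : R) (f : R -> R) (F : nat -> R -> R) : Prop :=
  Ck_derivs k h f F /\ (forall j, (j <= k)%nat -> F j 0 = 0).

Definition Ck_norm_le (k : nat) (h : R) (F : nat -> R -> R) (M : R) : Prop :=
  forall j, (j <= k)%nat -> forall x, Icc h x -> Rabs (F j x) <= M.

Definition wfun (gamma : R) (g : R -> R) (x : R) : R :=
  if Rlt_dec 0 x then g x * Rpower x (gamma - 1) else 0.

From Stdlib Require Import Reals Lra Lia.
From Coquelicot Require Import Coquelicot.
Open Scope R_scope.

(* Since g, g', ..., g^(k) vanish at 0, iterated mean value estimates give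
   |g^(i)(x)| <= |g^(k)|_oo x^(k-i).  By the product rule, for x > 0,
   w^(j)(x) = sum_(i <= j) c_(j,i) g^(i)(x) x^(gamma-1-j+i), hence
   |w^(j)(x)| <= (sum_i |c_(j,i)|) |g^(k)|_oo x^(k-1-j+gamma).  For j < k this is
   bounded on [0, a] in terms of a, k and gamma only, and since gamma > 0 it also
   forces w^(j)(x) -> 0 and, for j < k - 1, w^(j)(x)/x -> 0 as x -> 0+, which gives
   continuity and differentiability at 0 with vanishing values. *)

Lemma filterlim_within_limit1_in (D : R -> Prop) (f : R -> R) (x l : R) :
  filterlim f (within D (locally x)) (locally l) <-> limit1_in f D l x.
Proof.
  rewrite filterlim_locally; split.
  - intros H eps Heps.
    destruct (H (mkposreal eps Heps)) as [alp Halp].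
    exists alp; split; [apply cond_pos|].
    intros y [Dy Hy]; exact (Halp y Hy Dy).
  - intros H eps.
    destruct (H eps (cond_pos eps)) as [alp [Halp Hf]].
    exists (mkposreal alp Halp); intros y Hy Dy; exact (Hf y (conj Dy Hy)).
Qed.

Lemma derive_within_D_in (D : R -> Prop) (f : R -> R) (x l : R) :
  derive_within D f x l <-> D_in f (fun _ => l) D x.
Proof.
  unfold derive_within, D_in, D_x; rewrite filterlim_within_limit1_in.
  split; apply limit1_imp; intros y [Dy Hy]; auto.
Qed.

Lemma continue_in_cont_within (D : R -> Prop) (f : R -> R) (x : R) :
  continue_in f D x -> cont_within D f x.
Proof.
  intros H; apply filterlim_within_limit1_in; intros eps Heps.
  destruct (H eps Heps) as [alp [Halp Hf]]; exists alp; split; [exact Halp|].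
  intros y [Dy Hy]; destruct (Req_dec x y) as [<-|Hxy].
  - simpl; unfold R_dist; rewrite Rminus_eq_0, Rabs_R0; exact Heps.
  - apply Hf; repeat split; auto.
Qed.

Lemma derive_within_cont (D : R -> Prop) (f : R -> R) (x l : R) :
  derive_within D f x l -> cont_within D f x.
Proof.
  intros H; apply continue_in_cont_within.
  exact (cont_deriv _ _ _ _ (proj1 (derive_within_D_in _ _ _ _) H)).
Qed.

Lemma limit1_imp_near (f : R -> R) (D D' : R -> Prop) (l x r : R) : 0 < r ->
  (forall y, D y -> Rabs (y - x) < r -> D' y) -> limit1_in f D' l x -> limit1_in f D l x.
Proof.
  intros Hr HD H eps Heps; destruct (H eps Heps) as [alp [Halp Hf]].
  exists (Rmin alp r); split; [now apply Rmin_pos|].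
  intros y [Dy Hy]; simpl in Hy; unfold R_dist in Hy.
  pose proof (Rmin_l alp r); pose proof (Rmin_r alp r).
  apply Hf; split; [apply HD; auto; lra|]; simpl; unfold R_dist; lra.
Qed.

Lemma D_in_ext_near (f g d : R -> R) (D : R -> Prop) (x r : R) : 0 < r -> f x = g x ->
  (forall y, D y -> Rabs (y - x) < r -> f y = g y) -> D_in f d D x -> D_in g d D x.
Proof.
  unfold D_in; intros Hr Hx Hfg H.
  apply limit1_imp_near with (D' := fun y => D_x D x y /\ Rabs (y - x) < r) (r := r);
    [exact Hr | auto |].
  apply limit1_ext with (f := fun y => (f y - f x) / (y - x)).
  { intros y [[Dy _] Hy]; rewrite Hx, (Hfg y Dy Hy); reflexivity. }
  apply limit1_imp with (D := D_x D x); [tauto | exact H].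
Qed.

Lemma D_in_of_derivable_pt_lim (f : R -> R) (D : R -> Prop) (x l : R) :
  derivable_pt_lim f x l -> D_in f (fun _ => l) D x.
Proof.
  intros H; apply (derivable_pt_lim_D_in f (fun _ => l)) in H.
  apply limit1_imp with (D := D_x no_cond x); [|exact H].
  intros y [_ Hy]; split; [exact I | exact Hy].
Qed.

Lemma derivable_pt_lim_of_D_in (f : R -> R) (D : R -> Prop) (x l r : R) : 0 < r ->
  (forall y, Rabs (y - x) < r -> D y) -> D_in f (fun _ => l) D x -> derivable_pt_lim f x l.
Proof.
  intros Hr HD H; apply (derivable_pt_lim_D_in f (fun _ => l)).
  apply limit1_imp_near with (D' := D_x D x) (r := r); [exact Hr | | exact H].
  intros y [_ Hy] Hyx; split; auto.
Qed.

Lemma D_in_sum (f : nat -> R -> R) (l : nat -> R) (D : R -> Prop) (x : R) (n : nat) :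
  (forall i, (i <= n)%nat -> D_in (f i) (fun _ => l i) D x) ->
  D_in (fun y => sum_f_R0 (fun i => f i y) n) (fun _ => sum_f_R0 l n) D x.
Proof.
  induction n as [|n IH]; intros H; simpl.
  - apply H; lia.
  - apply (Dadd D (fun _ => sum_f_R0 l n) (fun _ => l (S n))).
    + apply IH; intros; apply H; lia.
    + apply H; lia.
Qed.

(* [MVT_gen] asks for continuity on all of R at the endpoints; composing with
   [clamp y] extends a function continuously beyond [0, y]. *)
Definition clamp (y t : R) : R := Rmax 0 (Rmin t y).

Lemma clamp_Icc (y t : R) : 0 <= y -> Icc y (clamp y t).
Proof. intros; unfold Icc, clamp, Rmax, Rmin; repeat destruct Rle_dec; lra. Qed.

Lemma clamp_id (y t : R) : Icc y t -> clamp y t = t.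
Proof. unfold Icc, clamp, Rmax, Rmin; intros; repeat destruct Rle_dec; lra. Qed.

Lemma clamp_lipschitz (y t u : R) : Rabs (clamp y u - clamp y t) <= Rabs (u - t).
Proof.
  unfold clamp, Rmax, Rmin; repeat destruct Rle_dec; unfold Rabs; repeat destruct Rcase_abs; lra.
Qed.

Lemma continuity_pt_comp_clamp (h y t : R) (f : R -> R) : 0 <= y <= h ->
  (forall s, Icc h s -> cont_within (Icc h) f s) -> continuity_pt (fun s => f (clamp y s)) t.
Proof.
  intros Hy Hf; unfold continuity_pt, continue_in.
  assert (Hc : forall s, Icc h (clamp y s)).
  { intros s; pose proof (clamp_Icc y s); unfold Icc in *; lra. }
  apply limit1_imp with (D := Dgf no_cond (Icc h) (clamp y)).
  { intros s _; split; [exact I | apply Hc]. }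
  apply limit_comp with (l := clamp y t).
  - intros eps Heps; exists eps; split; [exact Heps|].
    intros s [_ Hs]; simpl in *; unfold R_dist in *.
    eapply Rle_lt_trans; [apply clamp_lipschitz | exact Hs].
  - apply filterlim_within_limit1_in, Hf, Hc.
Qed.

Lemma derive_within_increment_bound (h y L : R) (f f' : R -> R) : 0 < y <= h ->
  (forall t, Icc h t -> cont_within (Icc h) f t) ->
  (forall t, 0 < t < h -> derive_within (Icc h) f t (f' t)) ->
  (forall t, 0 <= t <= y -> Rabs (f' t) <= L) -> Rabs (f y - f 0) <= L * y.
Proof.
  intros Hy Hc Hd HL.
  destruct (MVT_gen (fun s => f (clamp y s)) 0 y f') as [c [Hcy Hmvt]];
    rewrite ?Rmin_left, ?Rmax_right in * by lra.
  - intros t Ht; apply is_derive_Reals.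
    assert (Hr : 0 < Rmin t (y - t)) by (apply Rmin_pos; lra).
    pose proof (Rmin_l t (y - t)); pose proof (Rmin_r t (y - t)).
    apply (derivable_pt_lim_D_in _ (fun _ => f' t)).
    apply D_in_ext_near with (f := f) (r := Rmin t (y - t)); [exact Hr | | |].
    + rewrite clamp_id; [reflexivity | unfold Icc; lra].
    + intros s _ Hs; apply Rabs_lt_between in Hs; rewrite clamp_id; [reflexivity | unfold Icc; lra].
    + apply D_in_of_derivable_pt_lim.
      assert (Hr' : 0 < Rmin t (h - t)) by (apply Rmin_pos; lra).
      pose proof (Rmin_l t (h - t)); pose proof (Rmin_r t (h - t)).
      apply (derivable_pt_lim_of_D_in _ (Icc h) _ _ _ Hr').
      * intros s Hs; apply Rabs_lt_between in Hs; unfold Icc; lra.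
      * apply derive_within_D_in, Hd; lra.
  - intros t _; apply continuity_pt_comp_clamp with h; [lra | exact Hc].
  - rewrite !clamp_id in Hmvt by (unfold Icc; lra).
    rewrite Hmvt, Rminus_0_r, Rabs_mult, (Rabs_right y) by lra.
    apply Rmult_le_compat_r; [lra | apply HL; lra].
Qed.

Lemma Ck_derivs_vanishing_bound (k : nat) (h y0 M : R) (g : R -> R) (G : nat -> R -> R) :
  Ck_derivs k h g G -> (forall j, (j <= k)%nat -> G j 0 = 0) -> 0 <= y0 <= h ->
  (forall y, 0 <= y <= y0 -> Rabs (G k y) <= M) ->
  forall i y, (i <= k)%nat -> 0 <= y <= y0 -> Rabs (G i y) <= M * y ^ (k - i).
Proof.
  intros [_ [Hc Hd]] HG0 Hy0 HM i y Hi Hy.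
  assert (HM0 : 0 <= M) by (eapply Rle_trans; [apply Rabs_pos | apply (HM 0); lra]).
  remember (k - i)%nat as d eqn:Hki; revert i y Hi Hy Hki.
  induction d as [|d IH]; intros i y Hi Hy Hki.
  - replace i with k by lia; rewrite pow_O, Rmult_1_r; apply HM, Hy.
  - destruct (Req_dec y 0) as [->|Hy'].
    + rewrite HG0, Rabs_R0, pow_i, Rmult_0_r by lia; lra.
    + replace (G i y) with (G i y - G i 0) by (rewrite HG0 by lia; ring).
      replace (M * y ^ S d) with (M * y ^ d * y) by (simpl; ring).
      apply derive_within_increment_bound with h (G (S i)); [lra | | |].
      * intros t Ht; apply Hc; [lia | exact Ht].
      * intros t Ht; apply Hd; [lia | unfold Icc; lra].
      * intros t Ht; eapply Rle_trans; [apply IH; [lia | lra | lia]|].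
        apply Rmult_le_compat_l; [exact HM0 | apply pow_incr; lra].
Qed.

Lemma limit1_in_0_of_Rpower_bound (D : R -> Prop) (f : R -> R) (B gam r : R) :
  0 < gam -> 0 < r -> f 0 = 0 -> (forall y, D y -> 0 <= y) ->
  (forall y, D y -> 0 < y < r -> Rabs (f y) <= B * Rpower y gam) -> limit1_in f D 0 0.
Proof.
  intros Hgam Hr Hf0 HD Hb eps Heps.
  set (B' := Rabs B + 1).
  assert (HB' : B <= B' /\ 0 < B').
  { pose proof (Rle_abs B); pose proof (Rabs_pos B); unfold B'; lra. }
  set (delta := Rpower (eps / B') (/ gam)).
  assert (Hdelta : Rpower delta gam = eps / B').
  { unfold delta; rewrite Rpower_mult, Rinv_l, Rpower_1 by (try apply Rdiv_lt_0_compat; lra).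
    reflexivity. }
  exists (Rmin r delta); split; [apply Rmin_pos; [lra | apply exp_pos]|].
  pose proof (Rmin_l r delta); pose proof (Rmin_r r delta).
  intros y [Dy Hy]; simpl in *; unfold R_dist in *; rewrite Rminus_0_r in *.
  pose proof (HD y Dy) as Hy0.
  destruct (Req_dec y 0) as [->|Hyn]; [rewrite Hf0, Rabs_R0; lra|].
  rewrite Rabs_right in Hy by lra.
  assert (Hpow : Rpower y gam < eps / B') by (rewrite <- Hdelta; apply Rlt_Rpower_l; lra).
  assert (Hpos : 0 < Rpower y gam) by apply exp_pos.
  eapply Rle_lt_trans; [apply Hb; auto; lra|].
  apply Rle_lt_trans with (B' * Rpower y gam); [apply Rmult_le_compat_r; lra|].
  apply Rmult_lt_compat_l with (r := B') in Hpow; [|lra].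
  replace (B' * (eps / B')) with eps in Hpow by (field; lra); exact Hpow.
Qed.

(* For x > 0, (g(x) x^(gam-1))^(j) = sum_(i <= j) wcoef gam j i * g^(i)(x) * x^(wexp gam j i):
   the recursion is the product rule, and wcoef gam j i = C(j,i) (gam-1)(gam-2)...(gam-j+i). *)
Definition wexp (gam : R) (j i : nat) : R := gam - 1 - INR j + INR i.

Fixpoint wcoef (gam : R) (j i : nat) : R :=
  match j with
  | O => match i with O => 1 | S _ => 0 end
  | S j' => match i with O => 0 | S i' => wcoef gam j' i' end + wexp gam j' i * wcoef gam j' i
  end.

Lemma wcoef_gt (gam : R) (j i : nat) : (j < i)%nat -> wcoef gam j i = 0.
Proof.
  revert i; induction j as [|j IH]; intros [|i] Hi; simpl; try lia; [reflexivity|].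
  rewrite !IH by lia; ring.
Qed.

Lemma wcoef_product_rule (gam : R) (a : nat -> R) (P : R -> R) (j : nat) :
  sum_f_R0 (fun i => wcoef gam j i * a (S i) * P (wexp gam j i)
                     + wcoef gam j i * a i * (wexp gam j i * P (wexp gam j i - 1))) j
  = sum_f_R0 (fun i => wcoef gam (S j) i * a i * P (wexp gam (S j) i)) (S j).
Proof.
  assert (Hshift : forall i, wexp gam (S j) (S i) = wexp gam j i).
  { intros i; unfold wexp; rewrite !S_INR; ring. }
  assert (Hdown : forall i, wexp gam (S j) i = wexp gam j i - 1).
  { intros i; unfold wexp; rewrite S_INR; ring. }
  rewrite sum_plus.
  transitivity
    (sum_f_R0 (fun i => match i with O => 0 | S i' => wcoef gam j i' end
                        * a i * P (wexp gam (S j) i)) (S j)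
     + sum_f_R0 (fun i => wexp gam j i * wcoef gam j i * a i * P (wexp gam (S j) i)) (S j)).
  - f_equal.
    + rewrite (decomp_sum _ (S j)) by lia; simpl pred; rewrite !Rmult_0_l, Rplus_0_l.
      apply sum_eq; intros i _; rewrite Hshift; reflexivity.
    + rewrite tech5, (wcoef_gt gam j (S j)) by lia; rewrite Rmult_0_r, !Rmult_0_l, Rplus_0_r.
      apply sum_eq; intros i _; rewrite Hdown; ring.
  - rewrite <- sum_plus; apply sum_eq; intros i _; simpl; ring.
Qed.

Definition wderiv (gam : R) (G : nat -> R -> R) (j : nat) (x : R) : R :=
  if Rlt_dec 0 x then sum_f_R0 (fun i => wcoef gam j i * G i x * Rpower x (wexp gam j i)) j else 0.

Definition wcoef_abs_sum (gam : R) (j : nat) : R := sum_f_R0 (fun i => Rabs (wcoef gam j i)) j.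

Lemma wcoef_abs_sum_ge0 (gam : R) (j : nat) : 0 <= wcoef_abs_sum gam j.
Proof. apply cond_pos_sum; intros; apply Rabs_pos. Qed.

Lemma wderiv_pos (gam x : R) (G : nat -> R -> R) (j : nat) : 0 < x ->
  wderiv gam G j x = sum_f_R0 (fun i => wcoef gam j i * G i x * Rpower x (wexp gam j i)) j.
Proof. intros; unfold wderiv; destruct Rlt_dec; [reflexivity | lra]. Qed.

Lemma wderiv_nonpos (gam x : R) (G : nat -> R -> R) (j : nat) : x <= 0 -> wderiv gam G j x = 0.
Proof. intros; unfold wderiv; destruct Rlt_dec; [lra | reflexivity]. Qed.

Lemma pow_Rpower_wexp (y gam : R) (i j k : nat) : 0 < y -> (i <= j)%nat -> (j < k)%nat ->
  y ^ (k - i) * Rpower y (wexp gam j i) = y ^ (k - 1 - j) * Rpower y gam.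
Proof.
  intros Hy Hij Hjk; rewrite <- !Rpower_pow, <- !Rpower_plus by exact Hy; f_equal.
  unfold wexp; rewrite !minus_INR by lia; simpl INR; ring.
Qed.

Lemma sum_f_R0_ge_term (f : nat -> R) (n i : nat) :
  (forall i, 0 <= f i) -> (i <= n)%nat -> f i <= sum_f_R0 f n.
Proof.
  intros Hf Hi; induction n as [|n IH]; simpl.
  - replace i with 0%nat by lia; lra.
  - destruct (Nat.eq_dec i (S n)) as [->|Hne].
    + pose proof (cond_pos_sum f n Hf); lra.
    + pose proof (IH ltac:(lia)); pose proof (Hf (S n)); lra.
Qed.

Definition wnorm_const (a gam : R) (k : nat) : R :=
  (1 + a) ^ k * Rpower (1 + a) gam * (1 + sum_f_R0 (wcoef_abs_sum gam) k).

Lemma wnorm_const_pos (a gam : R) (k : nat) : 0 <= a -> 0 < wnorm_const a gam k.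
Proof.
  intros Ha; unfold wnorm_const.
  pose proof (cond_pos_sum _ k (wcoef_abs_sum_ge0 gam)).
  repeat apply Rmult_lt_0_compat; [apply pow_lt; lra | apply exp_pos | lra].
Qed.

Section WeightedDerivatives.

Variables (gam h : R) (k : nat) (g : R -> R) (G : nat -> R -> R).
Hypotheses (Hgam : 0 < gam) (Hh : 0 < h) (HG : Ck_derivs k h g G)
  (HG0 : forall j, (j <= k)%nat -> G j 0 = 0) (Hk : (1 <= k)%nat).

Lemma D_in_wderiv (j : nat) (x : R) : (j < k)%nat -> 0 < x -> Icc h x ->
  D_in (wderiv gam G j) (fun _ => wderiv gam G (S j) x) (Icc h) x.
Proof.
  intros Hj Hx Hhx; destruct HG as [_ [_ Hd]].
  apply D_in_ext_near with
    (f := fun y => sum_f_R0 (fun i => wcoef gam j i * G i y * Rpower y (wexp gam j i)) j) (r := x);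
    [exact Hx | now rewrite wderiv_pos | |].
  { intros y _ Hy; apply Rabs_lt_between in Hy; rewrite wderiv_pos by lra; reflexivity. }
  rewrite wderiv_pos, <- (wcoef_product_rule gam (fun i => G i x) (Rpower x)) by exact Hx.
  apply D_in_sum; intros i Hi.
  exact (Dmult _ _ _ (fun y => wcoef gam j i * G i y) (fun y => Rpower y (wexp gam j i)) x
    (Dmult_const _ _ _ _ _ (proj1 (derive_within_D_in _ _ _ _) (Hd i ltac:(lia) x Hhx)))
    (D_in_of_derivable_pt_lim _ _ _ _ (derivable_pt_lim_power x _ Hx))).
Qed.

Lemma wderiv_bound (y0 M y : R) (j : nat) : 0 <= y0 <= h ->
  (forall t, 0 <= t <= y0 -> Rabs (G k t) <= M) -> (j < k)%nat -> 0 < y <= y0 ->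
  Rabs (wderiv gam G j y) <= wcoef_abs_sum gam j * M * y ^ (k - 1 - j) * Rpower y gam.
Proof.
  intros Hy0 HM Hj Hy; rewrite wderiv_pos by lra.
  eapply Rle_trans; [apply sum_f_R0_triangle|].
  apply Rle_trans with
    (sum_f_R0 (fun i => Rabs (wcoef gam j i) * (M * y ^ (k - 1 - j) * Rpower y gam)) j).
  - apply sum_Rle; intros i Hi.
    rewrite !Rabs_mult, (Rabs_right (Rpower y _)) by (left; apply exp_pos).
    replace (M * y ^ (k - 1 - j) * Rpower y gam) with (M * y ^ (k - i) * Rpower y (wexp gam j i))
      by (rewrite !Rmult_assoc, pow_Rpower_wexp by (lra || lia); reflexivity).
    rewrite <- Rmult_assoc.
    apply Rmult_le_compat_r; [left; apply exp_pos|].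
    apply Rmult_le_compat_l; [apply Rabs_pos|].
    apply (Ck_derivs_vanishing_bound k h y0 M g G HG HG0 Hy0 HM); [lia | lra].
  - right; unfold wcoef_abs_sum; rewrite <- scal_sum; ring.
Qed.

Lemma wderiv_small_near_0 : exists r, 0 < r <= 1 /\ forall j y, (j < k)%nat -> 0 < y < r ->
  Rabs (wderiv gam G j y) <= wcoef_abs_sum gam j * y ^ (k - 1 - j) * Rpower y gam.
Proof.
  destruct HG as [_ [Hc _]].
  assert (HGk : limit1_in (G k) (Icc h) 0 0).
  { rewrite <- (HG0 k) at 1 by lia; apply filterlim_within_limit1_in, Hc; [lia | unfold Icc; lra]. }
  destruct (HGk 1 Rlt_0_1) as [alp [Halp HGk1]].
  pose proof (Rmin_l h (alp / 2)); pose proof (Rmin_r h (alp / 2)).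
  set (y0 := Rmin h (alp / 2)) in *.
  assert (Hy0 : 0 < y0) by (apply Rmin_pos; lra).
  exists (Rmin y0 1); split; [split; [apply Rmin_pos; lra | apply Rmin_r]|].
  pose proof (Rmin_l y0 1); intros j y Hj Hy.
  rewrite <- (Rmult_1_r (wcoef_abs_sum gam j)).
  apply wderiv_bound with y0; [lra | | exact Hj | lra].
  intros t Ht; assert (Hth : Icc h t) by (unfold Icc; lra).
  assert (Hdist : R_dist t 0 < alp) by (unfold R_dist; rewrite Rminus_0_r, Rabs_right; lra).
  assert (Ht1 := HGk1 t (conj Hth Hdist)).
  simpl in Ht1; unfold R_dist in Ht1; rewrite Rminus_0_r in Ht1; lra.
Qed.

Lemma wderiv_cont_0 (j : nat) : (j < k)%nat -> cont_within (Icc h) (wderiv gam G j) 0.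
Proof.
  intros Hj; destruct wderiv_small_near_0 as [r [Hr Hsmall]].
  apply filterlim_within_limit1_in; rewrite wderiv_nonpos by lra.
  apply limit1_in_0_of_Rpower_bound with (wcoef_abs_sum gam j) gam r;
    [exact Hgam | lra | apply wderiv_nonpos; lra | intros y Hy; apply Hy |].
  intros y _ Hy; eapply Rle_trans; [apply Hsmall; assumption|].
  apply Rmult_le_compat_r; [left; apply exp_pos|].
  rewrite <- (Rmult_1_r (wcoef_abs_sum gam j)) at 2.
  apply Rmult_le_compat_l; [apply wcoef_abs_sum_ge0|].
  rewrite <- (pow1 (k - 1 - j)); apply pow_incr; lra.
Qed.

Lemma wderiv_derive_0 (j : nat) : (S j < k)%nat -> derive_within (Icc h) (wderiv gam G j) 0 0.
Proof.
  intros Hj; destruct wderiv_small_near_0 as [r [Hr Hsmall]].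
  apply filterlim_within_limit1_in.
  apply limit1_in_0_of_Rpower_bound with (wcoef_abs_sum gam j) gam r;
    [exact Hgam | lra | | intros y Hy; apply Hy |].
  { rewrite Rminus_eq_0; unfold Rdiv; ring. }
  intros y [_ Hy0] Hy; rewrite (wderiv_nonpos gam 0) by lra.
  rewrite Rminus_0_r, Rminus_0_r; unfold Rdiv; rewrite Rabs_mult, Rabs_inv, (Rabs_right y) by lra.
  apply Rmult_le_reg_r with y; [lra|]; rewrite Rmult_assoc, Rinv_l, Rmult_1_r by lra.
  eapply Rle_trans; [apply Hsmall; [lia | exact Hy]|].
  replace (k - 1 - j)%nat with (S (k - 1 - S j)) by lia; simpl pow.
  assert (Hpow : y ^ (k - 1 - S j) <= 1) by (rewrite <- (pow1 (k - 1 - S j)); apply pow_incr; lra).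
  replace (wcoef_abs_sum gam j * (y * y ^ (k - 1 - S j)) * Rpower y gam)
    with (wcoef_abs_sum gam j * Rpower y gam * y * y ^ (k - 1 - S j)) by ring.
  rewrite <- (Rmult_1_r (wcoef_abs_sum gam j * Rpower y gam * y)) at 2.
  apply Rmult_le_compat_l; [|exact Hpow].
  pose proof (wcoef_abs_sum_ge0 gam j); pose proof (exp_pos (gam * ln y)).
  apply Rmult_le_pos; [apply Rmult_le_pos|]; unfold Rpower; lra.
Qed.

Lemma wderiv_calC : calC (k - 1) h (wfun gam g) (wderiv gam G).
Proof.
  split; [split; [|split]|].
  - intros x Hx; unfold wderiv, wfun; destruct Rlt_dec; [|reflexivity].
    destruct HG as [Hg _]; simpl; rewrite Hg by exact Hx.
    unfold wexp; simpl INR; replace (gam - 1 - 0 + 0) with (gam - 1) by ring; ring.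
  - intros j Hj x Hx; destruct (Rlt_dec 0 x) as [Hx0|Hx0].
    + apply derive_within_cont with (wderiv gam G (S j) x).
      apply derive_within_D_in, D_in_wderiv; [lia | exact Hx0 | exact Hx].
    + replace x with 0 by (unfold Icc in Hx; lra); apply wderiv_cont_0; lia.
  - intros j Hj x Hx; destruct (Rlt_dec 0 x) as [Hx0|Hx0].
    + apply derive_within_D_in, D_in_wderiv; [lia | exact Hx0 | exact Hx].
    + replace x with 0 by (unfold Icc in Hx; lra); rewrite (wderiv_nonpos gam 0) by lra.
      apply wderiv_derive_0; lia.
  - intros j _; apply wderiv_nonpos; lra.
Qed.

Lemma wderiv_norm_bound (a M : R) : h <= a -> (forall y, Icc h y -> Rabs (G k y) <= M) ->
  Ck_norm_le (k - 1) h (wderiv gam G) (wnorm_const a gam k * M).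
Proof.
  intros Ha HM j Hj x Hx; unfold Icc in Hx.
  assert (HM0 : 0 <= M) by (eapply Rle_trans; [apply Rabs_pos | apply (HM 0); unfold Icc; lra]).
  pose proof (wnorm_const_pos a gam k ltac:(lra)).
  destruct (Rle_dec x 0) as [Hx0|Hx0].
  { rewrite wderiv_nonpos, Rabs_R0 by exact Hx0; apply Rmult_le_pos; lra. }
  eapply Rle_trans.
  { apply wderiv_bound with (y0 := h); [lra | intros t Ht; apply HM; exact Ht | lia | lra]. }
  assert (Hp : x ^ (k - 1 - j) <= (1 + a) ^ k).
  { apply Rle_trans with ((1 + a) ^ (k - 1 - j)); [apply pow_incr; lra|].
    apply Rle_pow; [lra | lia]. }
  assert (Hq : Rpower x gam <= Rpower (1 + a) gam) by (apply Rle_Rpower_l; lra).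
  assert (Hs : wcoef_abs_sum gam j <= 1 + sum_f_R0 (wcoef_abs_sum gam) k).
  { pose proof (sum_f_R0_ge_term (wcoef_abs_sum gam) k j (wcoef_abs_sum_ge0 gam) ltac:(lia)); lra. }
  pose proof (pow_le x (k - 1 - j) ltac:(lra)); pose proof (exp_pos (gam * ln x)).
  pose proof (wcoef_abs_sum_ge0 gam j).
  unfold wnorm_const, Rpower in *.
  replace (wcoef_abs_sum gam j * M * x ^ (k - 1 - j) * exp (gam * ln x))
    with (M * (x ^ (k - 1 - j) * exp (gam * ln x) * wcoef_abs_sum gam j)) by ring.
  rewrite (Rmult_comm _ M); apply Rmult_le_compat_l; [exact HM0|].
  apply Rmult_le_compat; [apply Rmult_le_pos; lra | lra | apply Rmult_le_compat; lra | exact Hs].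
Qed.

End WeightedDerivatives.

Theorem lemmaA3 :
  forall (a gamma : R) (k : nat),
    0 < a -> 0 < gamma -> (1 <= k)%nat ->
    exists C : R, 0 < C /\
      forall (alpha : R) (n m : nat),
        0 < alpha < 1 -> (0 < n)%nat -> is_m alpha n m -> (k <= m)%nat ->
        forall h : R, 0 < h <= a ->
        forall (g : R -> R) (G : nat -> R -> R),
          calC k h g G ->
          exists W : nat -> R -> R,
            calC (k - 1) h (wfun gamma g) W /\
            (forall M : R, (forall y, Icc h y -> Rabs (G k y) <= M) ->
                           Ck_norm_le (k - 1) h W (C * M)).
Proof.
  intros a gam k Ha Hgam Hk.
  exists (wnorm_const a gam k); split; [apply wnorm_const_pos; lra|].
  intros _ _ _ _ _ _ _ h Hh g G [HG HG0].
  exists (wderiv gam G); split.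
  - apply wderiv_calC; auto; lra.
  - intros M HM; apply wderiv_norm_bound with g; auto; lra.
Qed.
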